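(* Let $(V,L,\varphi,E)$ be a valuation system. Then $\varphi$ is extendible if and only if $\varphi$ is $\Pi_{\aleph_1}$-extendible. Moreover, if $\varphi$ is extendible, then $\overline\varphi=\Pi_{\aleph_1}\varphi$.
   Context: $\aleph_1$ denotes the smallest uncountable ordinal. A valuation system $(V,L,\varphi,E)$ consists of: (i) a lattice $V$ which is $\sigma$-distributive (for every $a\in V$ and sequence $(b_n)$ with existing infimum, $\bigwedge_n(a\vee b_n)$ exists and equals $a\vee\bigwedge_n b_n$, and dually for suprema); (ii) a sublattice $L$ of $V$; (iii) a partially ordered abelian group $E$ which is R-complete (whenever $x_1\ge x_2\ge\cdots$ and $y_1\ge y_2\ge\cdots$ in $E$ are such that $\bigwedge_n(x_n+y_n)$ exists, $\bigwedge_n x_n$ and $\bigwedge_n y_n$ exist; dually for increasing sequences); (iv) a valuation $\varphi:L\to E$ (order-preserving, $\varphi(a\wedge b)+\varphi(a\vee b)=\varphi(a)+\varphi(b)$). A decreasing (resp. increasing) sequence $(a_n)$ in $L$ is $\varphi$-convergent if $\bigwedge_n a_n$ exists in $V$ and $\bigwedge_n\varphi(a_n)$ exists in $E$ (resp. with suprema). $\Pi L:=\{\bigwedge_n a_n:(a_n)\ \varphi\text{-convergent decreasing}\}$ and $\varphi$ is $\Pi$-extendible if there is a valuation $\Pi\varphi:\Pi L\to E$ with $\Pi\varphi(\bigwedge_n a_n)=\bigwedge_n\varphi(a_n)$ for all such sequences; $\Sigma L,\Sigma$-extendible, $\Sigma\varphi$ dually. Hierarchy (transfinite recursion): $\Pi_0\varphi=\Sigma_0\varphi=\varphi$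 on $L$; $\varphi$ is $\Pi_{\alpha+1}$-extendible iff it is $\Sigma_\alpha$-extendible and $\Sigma_\alpha\varphi$ is $\Pi$-extendible, with $\Pi_{\alpha+1}\varphi=\Pi(\Sigma_\alpha\varphi)$ on $\Pi(\Sigma_\alpha L)$; $\varphi$ is $\Sigma_{\alpha+1}$-extendible iff it is $\Pi_\alpha$-extendible and $\Pi_\alpha\varphi$ is $\Sigma$-extendible, with $\Sigma_{\alpha+1}\varphi=\Sigma(\Pi_\alpha\varphi)$; at a limit $\lambda$, $\varphi$ is $\Pi_\lambda$-extendible iff $\Pi_\alpha$-extendible for all $\alpha<\lambda$, and then $\Pi_\lambda\varphi$ is the common extension of the $\Pi_\alpha\varphi$ ($\alpha<\lambda$) on $\bigcup_{\alpha<\lambda}\Pi_\alpha L$; similarly $\Sigma_\lambda$. The hierarchy has collapsed at $Q$, where $Q=\Pi_\alpha\varphi$ or $Q=\Sigma_\alpha\varphi$, if $\varphi$ is $\Pi_{\alpha+1}$- and $\Sigma_{\alpha+1}$-extendible and $\Pi(Q)=Q=\Sigma(Q)$. $\varphi$ is extendible if the hierarchy has collapsed at some $Q$; this $Q$ is then unique and denoted $\overline\varphi$. *)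

(* V : latticeType, E : porderZmodType (+ translation
   invariance as a hypothesis), subsets as predicates V -> Prop, partial maps
   as total maps V -> E considered only on their domain. *)
From HB Require Import structures.
From mathcomp Require Import all_boot all_order all_algebra.
From Stdlib Require Import Relations Wellfounded.
Set Implicit Arguments. Unset Strict Implicit. Unset Printing Implicit Defensive.
Import Order.TTheory GRing.Theory Num.Theory.
Local Open Scope order_scope.

Section Lattices.
Context {d : Order.disp_t}.

Definition is_inf {T : porderType d} (s : nat -> T) (x : T) : Prop :=
  (forall n, x <= s n) /\ (forall y, (forall n, y <= s n) -> y <= x).
Definition is_sup {T : porderType d} (s : nat -> T) (x : T) : Prop :=
  (forall n, s n <= x) /\ (forall y, (forall n, s n <= y) -> x <= y).

Definition decreasing {T : porderType d} (s : nat -> T) : Prop :=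
  forall n, s n.+1 <= s n.
Definition increasing {T : porderType d} (s : nat -> T) : Prop :=
  forall n, s n <= s n.+1.

Definition sigma_distributive (V : latticeType d) : Prop :=
  (forall (a : V) (b : nat -> V) (x : V),
      is_inf b x -> is_inf (fun n => a `|` b n) (a `|` x)) /\
  (forall (a : V) (b : nat -> V) (x : V),
      is_sup b x -> is_sup (fun n => a `&` b n) (a `&` x)).

Definition sublattice (V : latticeType d) (S : V -> Prop) : Prop :=
  forall a b, S a -> S b -> S (a `&` b) /\ S (a `|` b).
End Lattices.

Definition po_group (E : porderZmodType) : Prop :=
  forall x y z : E, (x <= y)%O -> ((x + z)%R <= (y + z)%R)%O.

Definition R_complete (E : porderZmodType) : Prop :=
  (forall x y : nat -> E, decreasing x -> decreasing y ->
     (exists s, is_inf (fun n => (x n + y n)%R) s) ->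
     (exists a, is_inf x a) /\ (exists b, is_inf y b)) /\
  (forall x y : nat -> E, increasing x -> increasing y ->
     (exists s, is_sup (fun n => (x n + y n)%R) s) ->
     (exists a, is_sup x a) /\ (exists b, is_sup y b)).

Section Valuations.
Context {d : Order.disp_t} {V : latticeType d} {E : porderZmodType}.

Definition valuation_on (S : V -> Prop) (f : V -> E) : Prop :=
  sublattice S /\
  (forall a b, S a -> S b -> (a <= b)%O -> (f a <= f b)%O) /\
  (forall a b, S a -> S b -> (f (a `&` b) + f (a `|` b) = f a + f b)%R).

Definition valuation_system (L : V -> Prop) (phi : V -> E) : Prop :=
  sigma_distributive V /\ sublattice L /\ po_group E /\ R_complete E /\
  valuation_on L phi.

Definition dec_conv (S : V -> Prop) (f : V -> E) (a : nat -> V) (x : V) (e : E)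
  : Prop :=
  (forall n, S (a n)) /\ decreasing a /\ is_inf a x /\ is_inf (fun n => f (a n)) e.
Definition inc_conv (S : V -> Prop) (f : V -> E) (a : nat -> V) (x : V) (e : E)
  : Prop :=
  (forall n, S (a n)) /\ increasing a /\ is_sup a x /\ is_sup (fun n => f (a n)) e.

Definition PiSet (S : V -> Prop) (f : V -> E) (x : V) : Prop :=
  exists a e, dec_conv S f a x e.
Definition SigmaSet (S : V -> Prop) (f : V -> E) (x : V) : Prop :=
  exists a e, inc_conv S f a x e.

Definition Pi_ext_to (S : V -> Prop) (f : V -> E) (D : V -> Prop) (g : V -> E)
  : Prop :=
  (forall x, D x <-> PiSet S f x) /\ valuation_on D g /\
  (forall a x e, dec_conv S f a x e -> g x = e).
Definition Sigma_ext_to (S : V -> Prop) (f : V -> E) (D : V -> Prop) (g : V -> E)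
  : Prop :=
  (forall x, D x <-> SigmaSet S f x) /\ valuation_on D g /\
  (forall a x e, inc_conv S f a x e -> g x = e).

Definition collapsed (D : V -> Prop) (f : V -> E) : Prop :=
  Pi_ext_to D f D f /\ Sigma_ext_to D f D f.
End Valuations.

(* Ordinals are represented by elements of well-ordered types: the element w
   of (W, lt) stands for the order type of {x | lt x w}. *)
Definition well_order {W : Type} (lt : W -> W -> Prop) : Prop :=
  (forall x, ~ lt x x) /\ (forall x y z, lt x y -> lt y z -> lt x z) /\
  (forall x y, lt x y \/ x = y \/ lt y x) /\ well_founded lt.

Definition is_bottom {W : Type} (lt : W -> W -> Prop) (x : W) : Prop :=
  forall y, ~ lt y x.
Definition is_succ {W : Type} (lt : W -> W -> Prop) (v x : W) : Prop :=
  lt v x /\ (forall y, lt v y -> lt y x -> False).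
Definition is_limit {W : Type} (lt : W -> W -> Prop) (x : W) : Prop :=
  ~ is_bottom lt x /\ (forall v, ~ is_succ lt v x).

Definition countable_below {W : Type} (lt : W -> W -> Prop) (v : W) : Prop :=
  exists f : W -> nat, forall x y, lt x v -> lt y v -> f x = f y -> x = y.
Definition is_aleph1 {W : Type} (lt : W -> W -> Prop) (w : W) : Prop :=
  ~ countable_below lt w /\ (forall v, lt v w -> countable_below lt v).

Section Hierarchy.
Context {d : Order.disp_t} {V : latticeType d} {E : porderZmodType}.
Variables (L : V -> Prop) (phi : V -> E).
Context {W : Type} (lt : W -> W -> Prop).

(* A run of the Pi/Sigma hierarchy along W.  dP x (resp. dS x) says that phi
   is Pi_x- (resp. Sigma_x-) extendible, and then (PD x, Pf x) (resp.
   (SD x, Sf x)) is Pi_x phi (resp. Sigma_x phi); the clauses are exactly the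
   transfinite recursion, so such data is unique where defined. *)
Definition is_run (dP dS : W -> Prop) (PD SD : W -> V -> Prop)
  (Pf Sf : W -> V -> E) : Prop :=
  forall x,
  (dP x ->
     (is_bottom lt x -> (forall u, PD x u <-> L u) /\
                        (forall u, L u -> Pf x u = phi u)) /\
     (forall v, is_succ lt v x -> dS v /\ Pi_ext_to (SD v) (Sf v) (PD x) (Pf x)) /\
     (is_limit lt x -> (forall v, lt v x -> dP v) /\
        (forall u, PD x u <-> exists v, lt v x /\ PD v u) /\
        (forall v u, lt v x -> PD v u -> Pf x u = Pf v u))) /\
  (dS x ->
     (is_bottom lt x -> (forall u, SD x u <-> L u) /\
                        (forall u, L u -> Sf x u = phi u)) /\
     (forall v, is_succ lt v x -> dP v /\ Sigma_ext_to (PD v) (Pf v) (SD x) (Sf x)) /\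
     (is_limit lt x -> (forall v, lt v x -> dS v) /\
        (forall u, SD x u <-> exists v, lt v x /\ SD v u) /\
        (forall v u, lt v x -> SD v u -> Sf x u = Sf v u))).

Definition Pi_extendible_at (w : W) : Prop :=
  exists dP dS PD SD Pf Sf, is_run dP dS PD SD Pf Sf /\ dP w.

Definition is_Pi_level (w : W) (D : V -> Prop) (g : V -> E) : Prop :=
  exists dP dS PD SD Pf Sf, is_run dP dS PD SD Pf Sf /\ dP w /\
    (forall u, D u <-> PD w u) /\ (forall u, D u -> g u = Pf w u).
End Hierarchy.

(* (D, g) is the (unique) Q = Pi_alpha phi or Sigma_alpha phi at which the
   hierarchy has collapsed, for some ordinal alpha *)
Definition is_closure_value {d : Order.disp_t} {V : latticeType d}
  {E : porderZmodType} (L : V -> Prop) (phi : V -> E)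
  (D : V -> Prop) (g : V -> E) : Prop :=
  exists (W : Type) (lt : W -> W -> Prop) (alpha beta : W),
    well_order lt /\ is_succ lt alpha beta /\
    exists dP dS PD SD Pf Sf, is_run L phi lt dP dS PD SD Pf Sf /\
      dP beta /\ dS beta /\
      ((collapsed (PD alpha) (Pf alpha) /\
        (forall u, D u <-> PD alpha u) /\ (forall u, D u -> g u = Pf alpha u)) \/
       (collapsed (SD alpha) (Sf alpha) /\
        (forall u, D u <-> SD alpha u) /\ (forall u, D u -> g u = Sf alpha u))).

Definition extendible {d : Order.disp_t} {V : latticeType d}
  {E : porderZmodType} (L : V -> Prop) (phi : V -> E) : Prop :=
  exists D g, is_closure_value L phi D g.

(* Call (D, g) closed over (L, phi) if it extends phi and is its own Pi- and
   Sigma-extension.  A transfinite induction puts every level of the hierarchy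
   inside every closed pair, with the same values, so the collapse value (which
   is closed) is the least closed pair.  Conversely, a closed pair (D, g) carries
   a run of the hierarchy along any well order: generate the levels from L,
   reading every value off g; they are sublattices because meets and joins of
   convergent sequences converge (sigma-distributivity and R-completeness).
   At the limit aleph_1, countably many elements of Pi_{aleph_1} L already lie
   in a single countable level Pi_alpha L, so the limit of a convergent sequence
   lies in level alpha + 2 < aleph_1: Pi_{aleph_1} phi is closed.  Hence a closed
   pair exists iff the hierarchy reaches aleph_1, and then it collapses at
   aleph_1, onto the least closed pair. *)

From HB Require Import structures.
From mathcomp Require Import all_boot all_order all_algebra.
From Stdlib Require Import Classical ClassicalEpsilon.
Set Implicit Arguments. Unset Strict Implicit. Unset Printing Implicit Defensive.
Import Order.TTheory GRing.Theory.
Local Open Scope order_scope.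

(* Reversing the orders of V and E exchanges decreasing sequences and infima
   with increasing sequences and suprema, so each Sigma-side fact below is the
   Pi-side fact for the dual orders. *)
Definition dual_group (E : porderZmodType) : Type := E.
HB.instance Definition _ (E : porderZmodType) := GRing.Zmodule.on (dual_group E).

Section DualGroupOrder.
Variable E : porderZmodType.
Let ge (x y : E) := y <= x.
Let ge_refl : reflexive ge. Proof. by move=> x; exact: lexx. Qed.
Let ge_anti : antisymmetric ge. Proof. by move=> x y h; apply: le_anti; rewrite andbC. Qed.
Let ge_trans : transitive ge. Proof. by move=> y x z xy yz; exact: le_trans yz xy. Qed.
HB.instance Definition _ :=
  Order.Le_isPOrder.Build ring_display (dual_group E) ge_refl ge_anti ge_trans.
End DualGroupOrder.

Section OrderDuality.
Context {d : Order.disp_t} {V : latticeType d} {E : porderZmodType}.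

Lemma po_group_dual : po_group E -> po_group (dual_group E).
Proof. by move=> po x y z; exact: po. Qed.

Lemma R_complete_dual : R_complete E -> R_complete (dual_group E).
Proof. by move=> [rc_inf rc_sup]; split; [exact: rc_sup | exact: rc_inf]. Qed.

Lemma sigma_distributive_dual : sigma_distributive V -> sigma_distributive V^d.
Proof. by move=> [sd_inf sd_sup]; split; [exact: sd_sup | exact: sd_inf]. Qed.

Lemma sublattice_dual (S : V -> Prop) : sublattice S -> @sublattice _ V^d S.
Proof. by move=> sS a b Sa Sb; have [] := sS a b Sa Sb. Qed.

Lemma valuation_on_dual (S : V -> Prop) (f : V -> E) :
  valuation_on S f -> @valuation_on _ V^d (dual_group E) S f.
Proof.
move=> [sS [f_mono f_mod]]; split; first exact: sublattice_dual.
split=> a b Sa Sb; first exact: f_mono.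
by rewrite addrC; exact: f_mod.
Qed.

End OrderDuality.

Section Sequences.
Context {d : Order.disp_t} {T : porderType d}.
Implicit Types (s t : nat -> T) (x : T).

Lemma decreasing_le s : decreasing s -> forall m n, (m <= n)%N -> s n <= s m.
Proof.
move=> ds m n; apply: (homo_leq (r := fun x y => y <= x)) => //.
by move=> y x z yx zy; exact: le_trans zy yx.
Qed.

Lemma is_inf_eq s t x : s =1 t -> is_inf s x -> is_inf t x.
Proof.
move=> st [lb glb]; split=> [n|y y_lb]; first by rewrite -st.
by apply: glb => n; rewrite st.
Qed.

Lemma is_inf_const x : is_inf (fun=> x) x.
Proof. by split=> [n|y /(_ 0%N)]. Qed.

End Sequences.

Section InfimumOfSum.
Context {E : porderZmodType} (po : po_group E).

Lemma le_add (a b c e : E) : a <= b -> c <= e -> (a + c)%R <= (b + e)%R.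
Proof.
move=> ab ce; apply: le_trans (po c ab) _.
by rewrite ![(b + _)%R]addrC; exact: po.
Qed.

Lemma is_inf_add (x y : nat -> E) ex ey : decreasing x -> decreasing y ->
  is_inf x ex -> is_inf y ey -> is_inf (fun n => x n + y n)%R (ex + ey)%R.
Proof.
move=> dx dy [x_lb x_glb] [y_lb y_glb]; split=> [n|z z_lb]; first exact: le_add.
have z_le m n : z <= (x m + y n)%R.
  apply: le_trans (z_lb (maxn m n)) _.
  by apply: le_add; apply: decreasing_le; rewrite ?leq_maxl ?leq_maxr.
have z_sub_y_le n : (z - y n)%R <= ex.
  by apply: x_glb => m; have := po (- y n)%R (z_le m n); rewrite addrK.
have z_sub_ex_le n : (z - ex)%R <= y n.
  by have := po (y n - ex)%R (z_sub_y_le n); rewrite addrA subrK [(ex + _)%R]addrC subrK.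
by have := po ex (y_glb _ z_sub_ex_le); rewrite subrK addrC.
Qed.

End InfimumOfSum.

Section LatticeInfima.
Context {d : Order.disp_t} {V : latticeType d}.

Lemma is_inf_meet (a b : nat -> V) x y : is_inf a x -> is_inf b y ->
  is_inf (fun n => a n `&` b n) (x `&` y).
Proof.
move=> [a_lb a_glb] [b_lb b_glb]; split=> [n|z z_lb]; first exact: leI2.
rewrite lexI; apply/andP; split; [apply: a_glb | apply: b_glb] => n;
  apply: le_trans (z_lb n) _; [exact: leIl | exact: leIr].
Qed.

Lemma is_inf_join (sd : sigma_distributive V) (a b : nat -> V) x y :
  decreasing a -> decreasing b -> is_inf a x -> is_inf b y ->
  is_inf (fun n => a n `|` b n) (x `|` y).
Proof.
move=> da db ia ib; split=> [n|z z_lb]; first exact: leU2 (ia.1 n) (ib.1 n).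
have z_le m : z <= a m `|` y.
  apply: (sd.1 (a m) b y ib).2 => n; apply: le_trans (z_lb (maxn m n)) _.
  by apply: leU2; apply: decreasing_le; rewrite ?leq_maxl ?leq_maxr.
rewrite joinC; apply: (sd.1 y a x ia).2 => m; rewrite joinC; exact: z_le.
Qed.

End LatticeInfima.

Lemma PiSet_sublattice {d : Order.disp_t} {V : latticeType d} {E : porderZmodType}
  (D S : V -> Prop) (g : V -> E) :
  sigma_distributive V -> po_group E -> R_complete E ->
  valuation_on D g -> (forall u, S u -> D u) -> sublattice S -> sublattice (PiSet S g).
Proof.
move=> sd po rc [_ [g_mono g_mod]] SD sS u1 u2.
move=> [a [e1 [Sa [da [ia ga]]]]] [c [e2 [Sc [dc [ic gc]]]]].
pose m n := a n `&` c n; pose j n := a n `|` c n.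
have Sm n : S (m n) by exact: (sS _ _ (Sa n) (Sc n)).1.
have Sj n : S (j n) by exact: (sS _ _ (Sa n) (Sc n)).2.
have g_dec s : (forall n, S (s n)) -> decreasing s -> decreasing (fun n => g (s n)).
  by move=> Ss ds n; apply: g_mono; [exact: SD | exact: SD | exact: ds].
have modular n : (g (a n) + g (c n))%R = (g (m n) + g (j n))%R.
  by rewrite g_mod //; exact: SD.
have dm : decreasing m := fun n => leI2 (da n) (dc n).
have dj : decreasing j := fun n => leU2 (da n) (dc n).
have sum_inf := is_inf_add po (g_dec _ Sa da) (g_dec _ Sc dc) ga gc.
have [[em gm] [ej gj]] :=
  rc.1 _ _ (g_dec _ Sm dm) (g_dec _ Sj dj) (ex_intro _ _ (is_inf_eq modular sum_inf)).
split; [exists m, em | exists j, ej]; do 3!split=> //.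
- exact: is_inf_meet.
- exact: is_inf_join.
Qed.

Lemma SigmaSet_sublattice {d : Order.disp_t} {V : latticeType d} {E : porderZmodType}
  (D S : V -> Prop) (g : V -> E) :
  sigma_distributive V -> po_group E -> R_complete E ->
  valuation_on D g -> (forall u, S u -> D u) -> sublattice S -> sublattice (SigmaSet S g).
Proof.
move=> sd po rc vD SD sS; apply: (@sublattice_dual _ V^d).
exact: (PiSet_sublattice (sigma_distributive_dual sd) (po_group_dual po)
  (R_complete_dual rc) (valuation_on_dual vD) SD (sublattice_dual sS)).
Qed.

Section Extensions.
Context {d : Order.disp_t} {V : latticeType d} {E : porderZmodType}.
Implicit Types (S D : V -> Prop) (f g : V -> E) (a : nat -> V).

(* [b = true] is the Pi side (decreasing sequences, infima), [b = false] the
   Sigma side. *)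
Definition conv b S f a x e := if b then dec_conv S f a x e else inc_conv S f a x e.
Definition conv_set b S f x := exists a e, conv b S f a x e.
Definition ext_to b S f D g :=
  (forall x, D x <-> conv_set b S f x) /\ valuation_on D g /\
  (forall a x e, conv b S f a x e -> g x = e).

Definition closed_over (L : V -> Prop) (phi : V -> E) D g :=
  (forall b, ext_to b D g D g) /\ (forall u, L u -> D u /\ g u = phi u).

Lemma conv_in b S f a x e : conv b S f a x e -> forall n, S (a n).
Proof. by case: b => -[]. Qed.

Lemma conv_const b S f u : S u -> conv b S f (fun=> u) u (f u).
Proof.
move=> Su; case: b; do 2!split=> //; split=> //=.
- exact: is_inf_const.
- exact: is_inf_const.
- exact: (@is_inf_const _ V^d).
- exact: (@is_inf_const _ (dual_group E)).
Qed.

Lemma conv_set_const b S f u : S u -> conv_set b S f u.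
Proof. by move=> Su; exists (fun=> u), (f u); exact: conv_const. Qed.

Lemma conv_transfer b S f S' f' a x e :
  (forall n, S' (a n)) -> (forall n, f' (a n) = f (a n)) ->
  conv b S f a x e -> conv b S' f' a x e.
Proof.
move=> S'a f'a; have fa : (fun n => f (a n)) =1 (fun n => f' (a n)) by move=> n; rewrite f'a.
case: b => -[_ [mono [lim flim]]]; do 3!split=> //.
- exact: is_inf_eq fa flim.
- exact: (@is_inf_eq _ (dual_group E) _ _ _ fa flim).
Qed.

Lemma conv_sub b S f S' f' a x e : (forall u, S u -> S' u /\ f' u = f u) ->
  conv b S f a x e -> conv b S' f' a x e.
Proof.
move=> SS' c; have Sa := conv_in c.
by apply: conv_transfer c => n; have [] := SS' _ (Sa n).
Qed.

Lemma conv_set_sub b S f S' f' x : (forall u, S u -> S' u /\ f' u = f u) ->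
  conv_set b S f x -> conv_set b S' f' x.
Proof. by move=> SS' [a [e c]]; exists a, e; exact: conv_sub c. Qed.

Lemma ext_to_const b S f D g u : ext_to b S f D g -> S u -> D u /\ g u = f u.
Proof.
move=> [D_set [_ g_lim]] Su; split; first by apply/D_set; exact: conv_set_const.
exact: g_lim (conv_const b f Su).
Qed.

Lemma valuation_on_eq D g D' g' : (forall u, D u <-> D' u) ->
  (forall u, D u -> g u = g' u) -> valuation_on D g -> valuation_on D' g'.
Proof.
move=> DD' gg' [sD [g_mono g_mod]]; split; [|split].
- by move=> a b /DD' Da /DD' Db; have [? ?] := sD _ _ Da Db; split; exact/DD'.
- by move=> a b /DD' Da /DD' Db ab; rewrite -!gg' //; exact: g_mono.
- move=> a b /DD' Da /DD' Db; have [? ?] := sD _ _ Da Db.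
  by rewrite -!gg' //; exact: g_mod.
Qed.

Lemma valuation_on_sub D S g : valuation_on D g -> (forall u, S u -> D u) ->
  sublattice S -> valuation_on S g.
Proof.
move=> [_ [g_mono g_mod]] SD sS; split=> //.
by split=> a b Sa Sb; [apply: g_mono | apply: g_mod]; exact: SD.
Qed.

Lemma ext_to_eq b D g D' g' : (forall u, D u <-> D' u) ->
  (forall u, D u -> g u = g' u) -> ext_to b D g D g -> ext_to b D' g' D' g'.
Proof.
move=> DD' gg' [D_set [vD g_lim]].
have to_D' u : D u -> D' u /\ g' u = g u by move=> Du; split; [exact/DD' | rewrite gg'].
have to_D u : D' u -> D u /\ g u = g' u by move=> /DD' Du; split; last rewrite gg'.
split; [|split].
- move=> x; split.
  + by move/DD'/D_set; apply: conv_set_sub.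
  + by move=> c; apply/DD'/D_set; move: c; apply: conv_set_sub.
- exact: valuation_on_eq vD.
- move=> a x e c; have cD := conv_sub to_D c.
  by rewrite -gg' ?(g_lim _ _ _ cD) //; apply/D_set; exists a, e.
Qed.

Lemma closed_over_eq L phi D g D' g' : (forall u, D u <-> D' u) ->
  (forall u, D u -> g u = g' u) -> closed_over L phi D g -> closed_over L phi D' g'.
Proof.
move=> DD' gg' [ext phiL]; split=> [b|u Lu]; first exact: ext_to_eq (ext b).
by have [Du <-] := phiL u Lu; split; [exact/DD' | rewrite gg'].
Qed.

Lemma closed_over_collapsed L phi D g : closed_over L phi D g -> collapsed D g.
Proof. by move=> [ext _]; split; [exact: ext true | exact: ext false]. Qed.

Lemma collapsed_ext_to D g : collapsed D g -> forall b, ext_to b D g D g.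
Proof. by move=> [Pi_ext Sigma_ext] []. Qed.

Lemma conv_set_sublattice b (D S : V -> Prop) (g : V -> E) :
  sigma_distributive V -> po_group E -> R_complete E ->
  valuation_on D g -> (forall u, S u -> D u) -> sublattice S -> sublattice (conv_set b S g).
Proof. by case: b; [exact: PiSet_sublattice | exact: SigmaSet_sublattice]. Qed.

End Extensions.

Section WellOrder.
Context {W : Type} (lt : W -> W -> Prop).

Lemma ordinal_cases x : is_bottom lt x \/ (exists y, is_succ lt y x) \/ is_limit lt x.
Proof.
have [|not_bot] := classic (is_bottom lt x); first by left.
have [|not_succ] := classic (exists y, is_succ lt y x); first by right; left.
by right; right; split=> // y sy; apply: not_succ; exists y.
Qed.

Lemma not_bottom_lt x : ~ is_bottom lt x -> exists y, lt y x.
Proof.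
by move=> not_bot; apply: NNPP => no_y; apply: not_bot => y yx; apply: no_y; exists y.
Qed.

Hypothesis hW : well_order lt.

Lemma wo_irrefl x : ~ lt x x.
Proof. by case: hW. Qed.
Lemma wo_trans x y z : lt x y -> lt y z -> lt x z.
Proof. by case: hW => _ [tr _]; exact: tr. Qed.
Lemma wo_total x y : lt x y \/ x = y \/ lt y x.
Proof. by case: hW => _ [_ [tot _]]; exact: tot. Qed.
Lemma wo_wf : well_founded lt.
Proof. by case: hW => _ [_ [_ wf]]. Qed.

Lemma wo_min (P : W -> Prop) x : P x -> exists m, P m /\ forall z, lt z m -> ~ P z.
Proof.
move=> Px; apply: NNPP => no_min; move: Px.
elim/(well_founded_ind wo_wf): x => x IH Px; apply: no_min; exists x.
by split=> // z; exact: IH.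
Qed.

Lemma le_of_lt_succ v y x : is_succ lt y x -> lt v x -> lt v y \/ v = y.
Proof.
move=> [yx no_between] vx; have [|[|yv]] := wo_total v y; [by left | by right |].
by case: (no_between _ yv vx).
Qed.

Lemma succ_inj y y' x : is_succ lt y x -> is_succ lt y' x -> y = y'.
Proof.
move=> sy sy'; have [yy'|//] := le_of_lt_succ sy sy'.1.
by case: (sy'.2 _ yy' sy.1).
Qed.

Lemma limit_succ_lt v y : is_limit lt y -> lt v y -> exists s, is_succ lt v s /\ lt s y.
Proof.
move=> [_ not_succ] vy; have [s [vs s_min]] := wo_min vy.
have ss : is_succ lt v s by split=> // z vz zs; exact: s_min zs vz.
exists s; split=> //; have [|[sy|ys]] := wo_total s y; [by [] | | by case: (s_min _ ys vy)].
by case: (not_succ v); rewrite -sy.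
Qed.

End WellOrder.

Section LevelMonotonicity.
Context {d : Order.disp_t} {V : latticeType d} {E : porderZmodType}.
Context {W : Type} (lt : W -> W -> Prop) (hW : well_order lt).
Variables (R : W -> Prop) (L : V -> Prop) (h : V -> E) (lvl : bool -> W -> V -> Prop).
Hypothesis R_down : forall x y, R x -> lt y x -> R y.
Hypothesis lvl_bottom : forall b x u, R x -> is_bottom lt x -> (lvl b x u <-> L u).
Hypothesis lvl_succ : forall b x y u, R x -> is_succ lt y x ->
  (lvl b x u <-> conv_set b (lvl (~~b) y) h u).
Hypothesis lvl_limit : forall b x u, R x -> is_limit lt x ->
  (lvl b x u <-> exists v, lt v x /\ lvl b v u).

Lemma level_succ_flip b x y u : R x -> is_succ lt y x -> lvl b y u -> lvl (~~b) x u.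
Proof.
by move=> Rx sy yu; apply/(lvl_succ _ _ Rx sy); rewrite negbK; exact: conv_set_const.
Qed.

Lemma level_sub_succ b x y u : R x -> is_succ lt y x ->
  (forall c v w, lt v y -> lvl c v w -> lvl c y w) -> lvl b y u -> lvl b x u.
Proof.
move=> Rx sy IHy yu; have Ry := R_down Rx sy.1; apply/(lvl_succ _ _ Rx sy).
have [y_bot|[[t st]|y_lim]] := ordinal_cases lt y.
- have Lu : L u := (lvl_bottom b u Ry y_bot).1 yu.
  by apply: conv_set_const; apply/(lvl_bottom (~~b) u Ry y_bot).
- move/(lvl_succ _ _ Ry st): yu; apply: conv_set_sub => z tz.
  by split=> //; exact: IHy st.1 tz.
- have [v [vy vu]] := (lvl_limit _ _ Ry y_lim).1 yu.
  have [s [vs sy']] := limit_succ_lt hW y_lim vy.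
  have s_flip : lvl (~~b) s u := level_succ_flip (R_down Ry sy') vs vu.
  exact: conv_set_const (IHy _ _ _ sy' s_flip).
Qed.

Lemma level_mono x b v u : R x -> lt v x -> lvl b v u -> lvl b x u.
Proof.
elim/(well_founded_ind (wo_wf hW)): x b v u => x IH b v u Rx vx vu.
have [x_bot|[[y sy]|x_lim]] := ordinal_cases lt x.
- by case: (x_bot v vx).
- have IHy c v' w : lt v' y -> lvl c v' w -> lvl c y w.
    by apply: IH sy.1 _ _ _ (R_down Rx sy.1).
  have yu : lvl b y u by have [vy|<-] := le_of_lt_succ hW sy vx; first exact: IHy vy vu.
  exact: level_sub_succ Rx sy IHy yu.
- by apply/(lvl_limit _ _ Rx x_lim); exists v.
Qed.

End LevelMonotonicity.

Section Runs.
Context {d : Order.disp_t} {V : latticeType d} {E : porderZmodType}.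
Context (L : V -> Prop) (phi : V -> E) {W : Type} (lt : W -> W -> Prop).
Variables (dP dS : W -> Prop) (PD SD : W -> V -> Prop) (Pf Sf : W -> V -> E).

Definition defined (b : bool) := if b then dP else dS.
Definition level (b : bool) := if b then PD else SD.
Definition value (b : bool) := if b then Pf else Sf.

Hypothesis run : is_run L phi lt dP dS PD SD Pf Sf.

Lemma run_at b x : defined b x ->
  (is_bottom lt x -> (forall u, level b x u <-> L u) /\
                     (forall u, L u -> value b x u = phi u)) /\
  (forall v, is_succ lt v x -> defined (~~b) v /\
      ext_to b (level (~~b) v) (value (~~b) v) (level b x) (value b x)) /\
  (is_limit lt x -> (forall v, lt v x -> defined b v) /\
      (forall u, level b x u <-> exists v, lt v x /\ level b v u) /\
      (forall v u, lt v x -> level b v u -> value b x u = value b v u)).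
Proof. by case: b (run x) => -[]. Qed.

Hypothesis hW : well_order lt.

Lemma run_extends_phi x b : defined b x -> forall u, L u -> level b x u /\ value b x u = phi u.
Proof.
elim/(well_founded_ind (wo_wf hW)): x b => x IH b dx u Lu.
have [at_bot [at_succ at_lim]] := run_at dx.
have [x_bot|[[y sy]|x_lim]] := ordinal_cases lt x.
- by have [lvl_L val_phi] := at_bot x_bot; split; [exact/lvl_L | exact: val_phi].
- have [dy ext] := at_succ _ sy; have [yu <-] := IH y sy.1 _ dy u Lu.
  exact: ext_to_const ext yu.
- have [d_below [lvl_x val_x]] := at_lim x_lim.
  have [v vx] := not_bottom_lt x_lim.1.
  have [vu <-] := IH v vx _ (d_below v vx) u Lu.
  by split; [apply/lvl_x; exists v | exact: val_x].
Qed.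

Lemma collapsed_level_closed b x : defined b x ->
  collapsed (level b x) (value b x) -> closed_over L phi (level b x) (value b x).
Proof. by move=> dx coll; split; [exact: collapsed_ext_to | exact: run_extends_phi dx]. Qed.

Lemma run_within_closed (D : V -> Prop) (g : V -> E) : closed_over L phi D g ->
  forall x b, defined b x -> forall u, level b x u -> D u /\ value b x u = g u.
Proof.
move=> [D_ext phi_in] x; elim/(well_founded_ind (wo_wf hW)): x => x IH b dx u xu.
have [at_bot [at_succ at_lim]] := run_at dx.
have [x_bot|[[y sy]|x_lim]] := ordinal_cases lt x.
- have [lvl_L val_phi] := at_bot x_bot; have Lu : L u by exact/lvl_L.
  by have [Du ->] := phi_in u Lu; rewrite val_phi.
- have [dy [lvl_x [_ val_x]]] := at_succ _ sy.
  have [a [e c]] := (lvl_x u).1 xu.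
  have cD : conv b D g a u e.
    by apply: conv_sub c => z yz; have [Dz <-] := IH y sy.1 _ dy z yz.
  have [D_set [_ g_lim]] := D_ext b.
  by rewrite (val_x _ _ _ c) (g_lim _ _ _ cD); split=> //; apply/D_set; exists a, e.
- have [d_below [lvl_x val_x]] := at_lim x_lim.
  have [v [vx vu]] := (lvl_x u).1 xu.
  by rewrite (val_x v u vx vu); exact: IH vx _ (d_below v vx) u vu.
Qed.

End Runs.

Section GeneratedLevels.
Context {d : Order.disp_t} {V : latticeType d} {E : porderZmodType}.
Context (L : V -> Prop) (g : V -> E) {W : Type} (lt : W -> W -> Prop).

(* Pi and Sigma steps are separate constructors: a single one with [conv_set b]
   would hide the recursive occurrence under a match on [b], which the
   positivity checker rejects. *)
Inductive gen_level : bool -> W -> V -> Prop :=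
| gen_bottom b x u : is_bottom lt x -> L u -> gen_level b x u
| gen_succ_Pi x y u :
    is_succ lt y x -> PiSet (gen_level false y) g u -> gen_level true x u
| gen_succ_Sigma x y u :
    is_succ lt y x -> SigmaSet (gen_level true y) g u -> gen_level false x u
| gen_limit b x v u : is_limit lt x -> lt v x -> gen_level b v u -> gen_level b x u.

Lemma gen_level_cases b x u : gen_level b x u ->
  (is_bottom lt x /\ L u) \/
  (exists y, is_succ lt y x /\ conv_set b (gen_level (~~b) y) g u) \/
  (is_limit lt x /\ exists v, lt v x /\ gen_level b v u).
Proof.
case=> {b x u} [b x u x_bot Lu | x y u sy yu | x y u sy yu | b x v u x_lim vx vu].
- by left.
- by right; left; exists y.
- by right; left; exists y.
- by right; right; split=> //; exists v.
Qed.

Lemma gen_level_bottom b x u : is_bottom lt x -> (gen_level b x u <-> L u).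
Proof.
move=> x_bot; split; last exact: gen_bottom.
case/gen_level_cases=> [[] //|[[y [sy _]]|[x_lim _]]]; first by case: (x_bot y sy.1).
by case: x_lim.1.
Qed.

Lemma gen_level_limit b x u : is_limit lt x ->
  (gen_level b x u <-> exists v, lt v x /\ gen_level b v u).
Proof.
move=> x_lim; split; last by move=> [v [vx vu]]; exact: gen_limit x_lim vx vu.
case/gen_level_cases=> [[x_bot _]|[[y [sy _]]|[_ //]]]; first by case: x_lim.
by case: (x_lim.2 _ sy).
Qed.

Hypothesis hW : well_order lt.

Lemma gen_level_succ b x y u : is_succ lt y x ->
  (gen_level b x u <-> conv_set b (gen_level (~~b) y) g u).
Proof.
move=> sy; split.
- case/gen_level_cases=> [[x_bot _]|[[y' [sy' yu]]|[x_lim _]]].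
  + by case: (x_bot y sy.1).
  + by rewrite (succ_inj hW sy sy').
  + by case: (x_lim.2 _ sy).
- by case: b => yu; [exact: gen_succ_Pi sy yu | exact: gen_succ_Sigma sy yu].
Qed.

Lemma gen_level_mono x b v u : lt v x -> gen_level b v u -> gen_level b x u.
Proof.
apply: (level_mono hW (R := fun=> True)) => // [b' x' u' _|b' x' y' u' _|b' x' u' _].
- exact: gen_level_bottom.
- exact: gen_level_succ.
- exact: gen_level_limit.
Qed.

Variables (phi : V -> E) (D : V -> Prop).
Hypothesis D_closed : closed_over L phi D g.

Lemma gen_level_closed x b u : gen_level b x u -> D u.
Proof.
have [D_ext phi_in] := D_closed.
elim/(well_founded_ind (wo_wf hW)): x b u => x IH b u.
case/gen_level_cases=> [[_ /phi_in [] //]|[[y [sy [a [e c]]]]|[_ [v [vx vu]]]]].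
- apply/((D_ext b).1 u); exists a, e.
  by apply: conv_sub c => z yz; split=> //; exact: IH sy.1 _ _ yz.
- exact: IH vx _ _ vu.
Qed.

Hypothesis hsys : valuation_system L phi.

Lemma gen_level_sublattice x b : sublattice (gen_level b x).
Proof.
have [sd [sL [po [rc _]]]] := hsys.
have [_ [vD _]] := D_closed.1 true.
elim/(well_founded_ind (wo_wf hW)): x b => x IH b.
have [x_bot|[[y sy]|x_lim]] := ordinal_cases lt x.
- move=> u1 u2 /(gen_level_bottom _ _ x_bot) L1 /(gen_level_bottom _ _ x_bot) L2.
  by have [? ?] := sL _ _ L1 L2; split; exact/gen_level_bottom.
- move=> u1 u2 /(gen_level_succ _ _ sy) y_u1 /(gen_level_succ _ _ sy) y_u2.
  have sS := conv_set_sublattice (b := b) sd po rc vD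
    (@gen_level_closed y (~~b)) (IH y sy.1 (~~b)).
  by have [? ?] := sS _ _ y_u1 y_u2; split; exact/(gen_level_succ _ _ sy).
- move=> u1 u2 /(gen_level_limit _ _ x_lim) [v1 [v1x v1_u1]].
  move=> /(gen_level_limit _ _ x_lim) [v2 [v2x v2_u2]].
  have [m [mx [m_u1 m_u2]]] : exists m, lt m x /\ gen_level b m u1 /\ gen_level b m u2.
    have [v12|[e12|v21]] := wo_total hW v1 v2.
    + by exists v2; split=> //; split=> //; exact: gen_level_mono v12 v1_u1.
    + by subst v2; exists v1.
    + by exists v1; split=> //; split=> //; exact: gen_level_mono v21 v2_u2.
  have [? ?] := IH m mx b _ _ m_u1 m_u2.
  by split; apply/(gen_level_limit _ _ x_lim); exists m.
Qed.

Lemma gen_level_ext b x y : is_succ lt y x ->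
  ext_to b (gen_level (~~b) y) g (gen_level b x) g.
Proof.
move=> sy; have [D_ext _] := D_closed; have [_ [vD _]] := D_ext b.
split; [|split].
- by move=> u; exact: gen_level_succ.
- exact: valuation_on_sub vD (@gen_level_closed x b) (@gen_level_sublattice x b).
- move=> a u e c; apply: (D_ext b).2.2.
  by apply: conv_sub c => z yz; split=> //; exact: gen_level_closed yz.
Qed.

Lemma gen_level_run : is_run L phi lt (fun=> True) (fun=> True)
  (gen_level true) (gen_level false) (fun=> g) (fun=> g).
Proof.
have [_ phi_in] := D_closed.
move=> x; split=> _; (split; [|split]).
1,4: by move=> x_bot; split=> [u|u /phi_in [] //]; exact: gen_level_bottom.
2,4: by move=> x_lim; do 2!split=> //; move=> u; exact: gen_level_limit.
- by move=> v sv; split=> //; exact: (gen_level_ext true).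
- by move=> v sv; split=> //; exact: (gen_level_ext false).
Qed.

End GeneratedLevels.

Section ClosureValues.
Context {d : Order.disp_t} {V : latticeType d} {E : porderZmodType}.
Variables (L : V -> Prop) (phi : V -> E).

Lemma closure_value_level (D : V -> Prop) (g : V -> E) : is_closure_value L phi D g ->
  exists W (lt : W -> W -> Prop) dP dS PD SD Pf Sf b x,
    [/\ well_order lt, is_run L phi lt dP dS PD SD Pf Sf, defined dP dS b x,
        collapsed (level PD SD b x) (value Pf Sf b x) &
        (forall u, D u <-> level PD SD b x u) /\ (forall u, D u -> g u = value Pf Sf b x u)].
Proof.
move=> [W [lt [alpha [beta [hW [sab [dP [dS [PD [SD [Pf [Sf [run [dPb [dSb Q]]]]]]]]]]]]]]].
have dSa : dS alpha := ((run_at run (b := true) dPb).2.1 _ sab).1.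
have dPa : dP alpha := ((run_at run (b := false) dSb).2.1 _ sab).1.
exists W, lt, dP, dS, PD, SD, Pf, Sf.
by case: Q => [[coll DQ]|[coll DQ]]; [exists true, alpha | exists false, alpha].
Qed.

Lemma closure_value_closed (D : V -> Prop) (g : V -> E) :
  is_closure_value L phi D g -> closed_over L phi D g.
Proof.
case/closure_value_level=> W [lt [dP [dS [PD [SD [Pf [Sf [b [x [hW run dx coll [DQ gQ]]]]]]]]]]].
apply: closed_over_eq (collapsed_level_closed run hW dx coll) => [u|u Qu].
- by rewrite DQ.
- by rewrite gQ //; exact/DQ.
Qed.

Lemma closure_value_least (D : V -> Prop) (g : V -> E) (D' : V -> Prop) (g' : V -> E) :
  is_closure_value L phi D g -> closed_over L phi D' g' ->
  forall u, D u -> D' u /\ g u = g' u.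
Proof.
case/closure_value_level=> W [lt [dP [dS [PD [SD [Pf [Sf [b [x [hW run dx _ [DQ gQ]]]]]]]]]]].
move=> D_closed u Du; rewrite gQ //.
exact: (run_within_closed run hW D_closed dx ((DQ u).1 Du)).
Qed.

End ClosureValues.

Section Aleph1.
Context {W : Type} (lt : W -> W -> Prop) (hW : well_order lt).
Variables (w1 : W) (hw1 : is_aleph1 lt w1).

Lemma aleph1_limit : is_limit lt w1.
Proof.
have [uncountable countable] := hw1; split=> [w1_bot|v sv].
  by apply: uncountable; exists (fun=> 0%N) => x y xw; case: (w1_bot x xw).
apply: uncountable; have [f f_inj] := countable _ sv.1.
exists (fun x => if excluded_middle_informative (x = v) then 0%N else (f x).+1).
move=> x y xw yw; case: excluded_middle_informative => xv;
  case: excluded_middle_informative => yv //; first by move=> _; rewrite xv yv.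
case=> fxy; have [xv'|//] := le_of_lt_succ hW sv xw.
by have [yv'|//] := le_of_lt_succ hW sv yw; exact: f_inj xv' yv' fxy.
Qed.

(* Otherwise [{x | x < w1}] would be the countable union of the countable sets
   [{x | x <= vs n}]. *)
Lemma aleph1_bounded (vs : nat -> W) : (forall n, lt (vs n) w1) ->
  exists x, lt x w1 /\ forall n, lt (vs n) x.
Proof.
move=> vs_lt; apply: NNPP => unbounded; apply: hw1.1.
have [F F_inj] := choice _ (fun n => hw1.2 _ (vs_lt n)).
have [N N_spec] : exists N : W -> nat, forall x, lt x w1 -> lt x (vs (N x)) \/ x = vs (N x).
  apply: (choice (fun x n => lt x w1 -> lt x (vs n) \/ x = vs n)) => x.
  have [xw|xw] := classic (lt x w1); last by exists 0%N.
  apply: NNPP => none; apply: unbounded; exists x; split=> // n.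
  by have [//|[e|vx]] := wo_total hW (vs n) x; case: none; exists n => _; [right | left].
exists (fun x => pickle (N x, if excluded_middle_informative (x = vs (N x)) then 0%N
                              else (F (N x) x).+1)).
move=> x y xw yw /(pcan_inj pickleK) [].
case: excluded_middle_informative => [ex|nx];
  case: excluded_middle_informative => [ey|ny] //= Nxy.
- by rewrite ex ey Nxy.
- case=> Fxy; rewrite Nxy in nx Fxy; apply: F_inj Fxy.
  + by have := N_spec x xw; rewrite Nxy; case.
  + by case: (N_spec y yw).
Qed.

End Aleph1.

Section PiAleph1.
Context {d : Order.disp_t} {V : latticeType d} {E : porderZmodType}.
Context (L : V -> Prop) (phi : V -> E) {W : Type} (lt : W -> W -> Prop).
Variables (hW : well_order lt) (w1 : W) (hw1 : is_aleph1 lt w1).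
Variables (dP dS : W -> Prop) (PD SD : W -> V -> Prop) (Pf Sf : W -> V -> E).
Hypotheses (run : is_run L phi lt dP dS PD SD Pf Sf) (dPw : dP w1).

Let w1_limit := aleph1_limit hW hw1.
Let top_limit := (run_at run (b := true) dPw).2.2 w1_limit.

Lemma defined_below b v : lt v w1 -> defined dP dS b v.
Proof.
case: b => vw; first exact: top_limit.1.
have [s [vs sw]] := limit_succ_lt hW w1_limit vw.
exact: ((run_at run (b := true) (top_limit.1 s sw)).2.1 _ vs).1.
Qed.

Lemma level_below_top b v u : lt v w1 -> level PD SD b v u ->
  PD w1 u /\ Pf w1 u = value Pf Sf b v u.
Proof.
have [_ [top_lvl top_val]] := top_limit; case: b => vw vu.
  by split; [apply/top_lvl; exists v | exact: top_val].
have [s [vs sw]] := limit_succ_lt hW w1_limit vw.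
have [su <-] := ext_to_const ((run_at run (b := true) (top_limit.1 s sw)).2.1 _ vs).2 vu.
by split; [apply/top_lvl; exists s | exact: top_val].
Qed.

Lemma level_mono_below b x v u : lt x w1 -> lt v x ->
  level PD SD b v u -> level PD SD b x u.
Proof.
have R_down y z : lt y w1 -> lt z y -> lt z w1 := fun yw zy => wo_trans hW zy yw.
have lvl_bottom b' y u' : lt y w1 -> is_bottom lt y -> (level PD SD b' y u' <-> L u').
  by move=> yw y_bot; exact: ((run_at run (defined_below b' yw)).1 y_bot).1.
have lvl_succ b' y z u' : lt y w1 -> is_succ lt z y ->
    (level PD SD b' y u' <-> conv_set b' (level PD SD (~~b') z) (Pf w1) u').
  move=> yw sz; have zw := wo_trans hW sz.1 yw.
  have [lvl_y _] := ((run_at run (defined_below b' yw)).2.1 _ sz).2.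
  have val w : level PD SD (~~b') z w -> Pf w1 w = value Pf Sf (~~b') z w.
    by move=> zw'; exact: (level_below_top zw zw').2.
  split=> [/lvl_y [a [e c]]|[a [e c]]]; [|apply/lvl_y]; exists a, e;
    by apply: conv_sub c => w zw'; split=> //; rewrite val.
have lvl_limit b' y u' : lt y w1 -> is_limit lt y ->
    (level PD SD b' y u' <-> exists v, lt v y /\ level PD SD b' v u').
  by move=> yw y_lim; exact: ((run_at run (defined_below b' yw)).2.2 y_lim).2.1.
by move=> xw vx vu; exact: (level_mono hW R_down lvl_bottom lvl_succ lvl_limit xw vx vu).
Qed.

Lemma sequence_in_level_below (a : nat -> V) : (forall n, PD w1 (a n)) ->
  exists m, lt m w1 /\ forall n, PD m (a n).
Proof.
move=> a_top.
have [vs vs_spec] : exists vs : nat -> W, forall n, lt (vs n) w1 /\ PD (vs n) (a n).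
  apply: (choice (fun n v => lt v w1 /\ PD v (a n))) => n.
  exact: (top_limit.2.1 (a n)).1 (a_top n).
have [m [mw vs_m]] := aleph1_bounded hW hw1 (fun n => (vs_spec n).1).
by exists m; split=> // n; exact: (level_mono_below (b := true) mw (vs_m n) (vs_spec n).2).
Qed.

Lemma pair_in_valuation_level u1 u2 : PD w1 u1 -> PD w1 u2 ->
  exists s, [/\ lt s w1, PD s u1, PD s u2 & valuation_on (PD s) (Pf s)].
Proof.
move=> u1_top u2_top.
have [m [mw m_u]] := sequence_in_level_below (a := fun n => if n is 0%N then u1 else u2)
  (fun n => if n is 0%N then u1_top else u2_top).
have [s [ms sw]] := limit_succ_lt hW w1_limit mw.
have [_ [vs _]] := ((run_at run (b := true) (top_limit.1 s sw)).2.1 _ ms).2.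
have s_u n : PD s (if n is 0%N then u1 else u2).
  exact: (level_mono_below (b := true) sw ms.1 (m_u n)).
by exists s; split=> //; [exact: (s_u 0%N) | exact: (s_u 1%N)].
Qed.

Lemma top_valuation : valuation_on (PD w1) (Pf w1).
Proof.
have val_top s u : lt s w1 -> PD s u -> Pf w1 u = Pf s u.
  by move=> sw su; exact: (level_below_top (b := true) sw su).2.
split; [|split] => u1 u2 u1_top u2_top;
  have [s [sw s_u1 s_u2 [s_sub [s_mono s_mod]]]] := pair_in_valuation_level u1_top u2_top.
- by have [? ?] := s_sub _ _ s_u1 s_u2; split; exact: (level_below_top (b := true) sw _).1.
- by rewrite !(val_top s) //; exact: s_mono.
- by have [? ?] := s_sub _ _ s_u1 s_u2; rewrite !(val_top s) //; exact: s_mod.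
Qed.

Lemma top_conv b a u e : conv b (PD w1) (Pf w1) a u e -> PD w1 u /\ Pf w1 u = e.
Proof.
move=> c; have [m [mw a_m]] := sequence_in_level_below (conv_in c).
have [s [ms sw]] := limit_succ_lt hW w1_limit mw.
have [s' [ss' s'w]] := limit_succ_lt hW w1_limit sw.
have m_in_s c' z : PD m z -> level PD SD c' s z.
  case: c' => mz; first exact: (level_mono_below (b := true) sw ms.1 mz).
  exact: (ext_to_const ((run_at run (defined_below false sw)).2.1 _ ms).2 mz).1.
have c_s : conv b (level PD SD (~~b) s) (value Pf Sf (~~b) s) a u e.
  apply: conv_transfer c => n; first exact: m_in_s (a_m n).
  exact: esym (level_below_top sw (m_in_s _ _ (a_m n))).2.
have [lvl_s' [_ val_s']] := ((run_at run (defined_below b s'w)).2.1 _ ss').2.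
have s'_u : level PD SD b s' u by apply/lvl_s'; exists a, e.
have [u_top ->] := level_below_top s'w s'_u.
by split=> //; exact: val_s' c_s.
Qed.

Lemma Pi_aleph1_closed : closed_over L phi (PD w1) (Pf w1).
Proof.
split=> [b|u Lu]; last exact: (run_extends_phi run hW (b := true) dPw Lu).
split; [|split]; last by move=> a u e /top_conv [].
- by move=> u; split=> [|[a [e /top_conv []]]]; first exact: conv_set_const.
- exact: top_valuation.
Qed.

End PiAleph1.

Section InsertAfter.
Context {W : Type} (lt : W -> W -> Prop) (hW : well_order lt) (w1 : W).

(* [None] is a new point placed immediately after [w1]. *)
Definition lt_after (x y : option W) : Prop :=
  match x, y with
  | Some x, Some y => lt x y
  | Some x, None => lt x w1 \/ x = w1
  | None, Some y => lt w1 y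
  | None, None => False
  end.

Lemma lt_after_wo : well_order lt_after.
Proof.
have irr := wo_irrefl hW; have tr := wo_trans hW.
have Acc_Some x : Acc lt_after (Some x).
  elim/(well_founded_ind (wo_wf hW)): x => x IH.
  constructor=> -[y yx|wx]; first exact: IH.
  constructor=> -[z|] /=; last by case.
  by case=> [zw|->]; [exact: IH (tr _ _ _ zw wx) | exact: IH].
split; [|split; [|split]].
- by case=> [x|] /=; [exact: irr|].
- case=> [x|] [y|] [z|] //=.
  + exact: tr.
  + by move=> xy [yw|<-]; left; [exact: tr xy yw|].
  + by move=> [xw|->] wz; [exact: tr xw wz|].
  + exact: tr.
  + by move=> wy [yw|yw]; [case: (irr _ (tr _ _ _ wy yw)) | move: wy; rewrite yw => /irr].
- case=> [x|] [y|] /=; last by right; left.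
  + by have [|[->|]] := wo_total hW x y; [left | right; left | right; right].
  + by have [|[->|]] := wo_total hW x w1; [left; left | left; right | right; right].
  + by have [|[->|]] := wo_total hW y w1; [right; right; left | right; right; right | left].
- case=> [x|]; first exact: Acc_Some.
  by constructor=> -[y _|/= []]; exact: Acc_Some.
Qed.

Lemma lt_after_succ : is_succ lt_after (Some w1) None.
Proof.
split=> [|[z|] //= wz]; first by right.
case=> [zw|zw]; first exact: wo_irrefl hW _ (wo_trans hW wz zw).
by move: wz; rewrite zw => /(wo_irrefl hW).
Qed.

Lemma lt_after_aleph1 : is_aleph1 lt w1 -> is_aleph1 lt_after (Some w1).
Proof.
move=> [uncountable countable]; split.
  move=> [f f_inj]; apply: uncountable; exists (fun x => f (Some x)) => x y xw yw fxy.
  by case: (f_inj (Some x) (Some y) xw yw fxy).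
case=> [v vw|/= /(wo_irrefl hW) //].
have [f f_inj] := countable v vw.
exists (fun o => if o is Some x then f x else 0%N) => -[x|] [y|] //= xv yv.
- by move/(f_inj x y xv yv)=> ->.
- by case: (wo_irrefl hW (wo_trans hW vw yv)).
- by case: (wo_irrefl hW (wo_trans hW vw xv)).
Qed.

End InsertAfter.

Section Extendibility.
Context {d : Order.disp_t} {V : latticeType d} {E : porderZmodType}.
Context (L : V -> Prop) (phi : V -> E) (hsys : valuation_system L phi).
Context {W : Type} (lt : W -> W -> Prop) (hW : well_order lt).

Lemma closed_Pi_extendible (D : V -> Prop) (g : V -> E) w :
  closed_over L phi D g -> Pi_extendible_at L phi lt w.
Proof.
move=> D_closed; exists (fun=> True), (fun=> True), (gen_level L g lt true),
  (gen_level L g lt false), (fun=> g), (fun=> g).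
by split=> //; exact: (gen_level_run hW D_closed hsys).
Qed.

(* Witness: the levels generated by the closed pair along [lt] extended by a
   successor of [w1]; they collapse at [w1]. *)
Lemma closed_extendible (D : V -> Prop) (g : V -> E) w1 :
  is_aleph1 lt w1 -> closed_over L phi D g -> extendible L phi.
Proof.
move=> hw1 D_closed; have hW' := lt_after_wo hW w1.
have run' := gen_level_run hW' D_closed hsys.
have top_closed := Pi_aleph1_closed hW' (lt_after_aleph1 hW hw1) run' I.
exists (gen_level L g (lt_after lt w1) true (Some w1)), g.
exists (option W), (lt_after lt w1), (Some w1), None.
split=> //; split; first exact: lt_after_succ hW w1.
exists (fun=> True), (fun=> True), (gen_level L g (lt_after lt w1) true),
  (gen_level L g (lt_after lt w1) false), (fun=> g), (fun=> g).
by do 3!split=> //; left; split; first exact: closed_over_collapsed top_closed.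
Qed.

Lemma Pi_level_least w (P : V -> Prop) (h : V -> E) (D : V -> Prop) (g : V -> E) :
  is_Pi_level L phi lt w P h -> closed_over L phi D g ->
  forall u, P u -> D u /\ h u = g u.
Proof.
move=> [dP [dS [PD [SD [Pf [Sf [run [dPw [PQ hQ]]]]]]]]] D_closed u Pu.
by rewrite hQ //; exact: (run_within_closed run hW D_closed (b := true) dPw ((PQ u).1 Pu)).
Qed.

Lemma Pi_aleph1_level_closed w1 (P : V -> Prop) (h : V -> E) :
  is_aleph1 lt w1 -> is_Pi_level L phi lt w1 P h -> closed_over L phi P h.
Proof.
move=> hw1 [dP [dS [PD [SD [Pf [Sf [run [dPw [PQ hQ]]]]]]]]].
apply: closed_over_eq (Pi_aleph1_closed hW hw1 run dPw) => [u|u Qu].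
- by rewrite PQ.
- by rewrite hQ //; exact/PQ.
Qed.

End Extendibility.

Theorem corollary5p33 (d : Order.disp_t) (V : latticeType d)
  (E : porderZmodType) (L : V -> Prop) (phi : V -> E)
  (hsys : valuation_system L phi)
  (W : Type) (lt : W -> W -> Prop) (hW : well_order lt)
  (w1 : W) (hw1 : is_aleph1 lt w1) :
  (extendible L phi <-> Pi_extendible_at L phi lt w1) /\
  (extendible L phi ->
   forall (D : V -> Prop) (g : V -> E), is_closure_value L phi D g ->
   forall (P : V -> Prop) (h : V -> E), is_Pi_level L phi lt w1 P h ->
   (forall u, D u <-> P u) /\ (forall u, D u -> g u = h u)).
Proof.
split; [split|].
- case=> D [g /closure_value_closed D_closed].
  exact: (closed_Pi_extendible hsys hW w1 D_closed).
- case=> dP [dS [PD [SD [Pf [Sf [run dPw]]]]]].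
  exact: (closed_extendible hsys hW hw1 (Pi_aleph1_closed hW hw1 run dPw)).
- move=> _ D g Dg P h Ph.
  have P_closed := Pi_aleph1_level_closed hW hw1 Ph.
  have D_closed := closure_value_closed Dg.
  split=> [u|u Du]; last exact: (closure_value_least Dg P_closed Du).2.
  split=> [Du|Pu]; first exact: (closure_value_least Dg P_closed Du).1.
  exact: (Pi_level_least hW Ph D_closed Pu).1.
Qed.
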